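(* Define rooted trees $H(k)$, $k\ge 0$, recursively: $H(0)$ is a single vertex $u_0$ (its root); for $k\ge 0$, $H(k+1)$ consists of a root $u_{k+1}$ with three children $v_1,v_2,v_3$, where each $v_i$ has exactly three children, each of which is the root of a copy of $H(k)$ (all nine copies being disjoint). Then for every $k\ge 0$, $\mathrm{lmw}(H(k))=k$ and $\mathrm{lmw}(H(k)^2)=\mathrm{lmw}(H(k)^2-u_k)=2k$, where $H(k)^2-u_k$ denotes the graph obtained from $H(k)^2$ by deleting the root $u_k$.
   Context: All graphs are finite and simple. For a graph $G$, its square $G^2$ is the graph on $V(G)$ in which two distinct vertices are adjacent iff their distance in $G$ is at most $2$. For disjoint $S,T\subseteq V(G)$, $G[S,T]$ denotes the bipartite graph on $S\cup T$ whose edges are exactly the edges of $G$ with one endpoint in $S$ and the other in $T$. $\mathrm{mim}(H)$ is the maximum number of edges in an induced matching of $H$. A linear layout of an $n$-vertex graph $G$ is a bijection $\sigma:V(G)\to\{1,\dots,n\}$; write $v_i=\sigma^{-1}(i)$ and $V_i^\sigma=\{v_1,\dots,v_i\}$, $\overline{V_i^\sigma}=V(G)\setminus V_i^\sigma$. The MIM-width of $G$ under $\sigma$ is $\mathrm{mw}(\sigma,G)=\max_{1\le i<n}\mathrm{mim}(G[V_i^\sigma,\overline{V_i^\sigma}])$ (equal to $0$ if $n\le 1$, including the empty graph). The linear MIM-width $\mathrm{lmw}(G)$ is the minimum of $\mathrm{mw}(\sigma,G)$ over all linear layouts $\sigma$ of $G$ (and is $0$ for the empty graph). *)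

(* Graphs: a simple graph is an irreflexive symmetric
   relation e : rel T on a finite type T (its vertex set). *)
From mathcomp Require Import all_boot.
Set Implicit Arguments. Unset Strict Implicit. Unset Printing Implicit Defensive.

Definition sq_graph (T : finType) (e : rel T) : rel T :=
  fun x y => (x != y) && (e x y || [exists z, e x z && e z y]).

Definition del_vertex (T : finType) (e : rel T) (r : T) : rel {x : T | x != r} :=
  fun x y => e (val x) (val y).
Arguments del_vertex [T] e r _ _.

(* A set M of pairs (a,b) is an induced matching of G[S, V\S] iff every pair is
   an edge of G with a in S and b notin S, distinct pairs share no endpoint,
   and there is no edge of G[S,V\S] between endpoints of distinct pairs
   (the only possible such edges are a--b' and a'--b, since G[S,V\S] has no
   edges inside S or inside V\S). *)
Definition induced_matching (T : finType) (e : rel T) (S : {set T})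
  (M : {set T * T}) : bool :=
  [forall p in M, [&& p.1 \in S, p.2 \notin S & e p.1 p.2]] &&
  [forall p in M, forall q in M, (p != q) ==>
     [&& p.1 != q.1, p.2 != q.2, ~~ e p.1 q.2 & ~~ e q.1 p.2]].

Definition mim_cut (T : finType) (e : rel T) (S : {set T}) : nat :=
  \max_(M : {set T * T} | induced_matching e S M) #|M|.

(* A linear layout is a bijection sigma : V -> {1..n}; we use positions
   'I_n = {0..n-1} (sigma x = i-1 here means position i), so
   V_i = {x | sigma x < i}. *)
Definition layout (T : finType) (s : {ffun T -> 'I_#|T|}) : bool := injectiveb s.

Definition prefix_set (T : finType) (s : {ffun T -> 'I_#|T|}) (i : nat) : {set T} :=
  [set x | (s x < i)%N].

Definition mim_width (T : finType) (e : rel T) (s : {ffun T -> 'I_#|T|}) : nat :=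
  \max_(i < #|T| | (0 < i)%N) mim_cut e (prefix_set s i).

(* lmw(G) = min over all linear layouts of mw(sigma,G).  The seed #|T| of the
   min is harmless: a layout always exists and mim <= #|T|. For the empty
   graph this gives 0. *)
Definition lmw (T : finType) (e : rel T) : nat :=
  \big[minn/#|T|]_(s : {ffun T -> 'I_#|T|} | layout s) mim_width e s.

(* Vertices of H(k+1):  None                    = root u_{k+1}
                        Some (i, None)          = child v_i (i < 3)
                        Some (i, Some (j, x))   = vertex x of the j-th copy of
                                                  H(k) hanging below v_i.   *)
Fixpoint Hv (k : nat) : finType :=
  match k with
  | 0 => unit
  | k'.+1 => option ('I_3 * option ('I_3 * Hv k'))%type
  end.

Fixpoint Hroot (k : nat) : Hv k :=
  match k return Hv k with
  | 0 => tt
  | k'.+1 => None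
  end.

Fixpoint Hadj (k : nat) : rel (Hv k) :=
  match k return rel (Hv k) with
  | 0 => fun _ _ => false
  | k'.+1 => fun x y =>
    match x, y with
    | None, Some (_, None) => true
    | Some (_, None), None => true
    | Some (i, None), Some (i', Some (_, z)) => (i == i') && (z == Hroot k')
    | Some (i', Some (_, z)), Some (i, None) => (i == i') && (z == Hroot k')
    | Some (i, Some (j, z)), Some (i', Some (j', z')) =>
        [&& i == i', j == j' & Hadj z z']
    | _, _ => false
    end
  end.

(* Upper bounds: lay out H(k+1) block by block, one block per child v_i holding
   the three copies of H(k) below v_i and then v_i, with the root right after v_0.
   A cut of this layout separates vertices of at most one copy, so an induced
   matching across it consists of edges inside that copy, bounded inductively, and
   of edges meeting the top levels, which pairwise conflict (in the square: within
   each of two classes).  This gives [k] and [2k].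
   Lower bounds: given any linear order, induction provides in each copy a cut
   threshold carrying a large induced matching.  At the median threshold the two
   other copies lie on both sides of the cut, and a connected set joining them far
   from the median copy contributes a further edge: one through the root in the
   tree, two in the square (through two sibling copies with their roots, and through
   two other branches).  These matchings avoid the root, which handles H(k)^2 - u_k. *)

From mathcomp Require Import all_boot zify.
Set Implicit Arguments. Unset Strict Implicit. Unset Printing Implicit Defensive.

Section InducedMatchings.
Variables (T : finType) (e : rel T).

Definition conflict (p q : T * T) : bool :=
  [|| p.1 == q.1, p.2 == q.2, e p.1 q.2 | e q.1 p.2].

Lemma induced_matching_edge S M p : induced_matching e S M -> p \in M ->
  [/\ p.1 \in S, p.2 \notin S & e p.1 p.2].
Proof. by case/andP=> /forallP /(_ p) + _ pM; rewrite pM => /and3P. Qed.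

Lemma induced_matching_conflict S M p q : induced_matching e S M ->
  p \in M -> q \in M -> p != q -> ~~ conflict p q.
Proof.
case/andP=> _ /forallP /(_ p) + pM qM npq; rewrite pM => /forallP /(_ q).
by rewrite qM npq /= /conflict => /and4P [/negbTE-> /negbTE-> /negbTE-> /negbTE->].
Qed.

Lemma induced_matching0 S : induced_matching e S set0.
Proof. by apply/andP; split; apply/forall_inP => p; rewrite in_set0. Qed.

Lemma induced_matchingS S (A M : {set T * T}) :
  A \subset M -> induced_matching e S M -> induced_matching e S A.
Proof.
move=> /subsetP sAM /andP [/forall_inP H1 /forall_inP H2].
apply/andP; split; apply/forall_inP => p /sAM pM; first exact: H1.
by apply/forall_inP => q /sAM qM; apply: (forall_inP (H2 p pM)).
Qed.

Lemma card_induced_matching S M : induced_matching e S M -> #|M| <= #|T|.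
Proof.
move=> HM; rewrite -(@card_in_imset _ _ fst) ?max_card // => p q pM qM /= Epq.
apply/eqP/negPn/negP => /(induced_matching_conflict HM pM qM).
by rewrite /conflict Epq eqxx.
Qed.

Lemma mim_cut_ge S M : induced_matching e S M -> #|M| <= mim_cut e S.
Proof. exact: (leq_bigmax_cond (F := fun M : {set T * T} => #|M|)). Qed.

Lemma mim_cut_le S K :
  (forall M, induced_matching e S M -> #|M| <= K) -> mim_cut e S <= K.
Proof. by move=> H; apply/bigmax_leqP. Qed.

Lemma mim_cut_le_card S : mim_cut e S <= #|T|.
Proof. exact/mim_cut_le/card_induced_matching. Qed.

Lemma mim_cut_empty S : (forall x y, ~~ e x y) -> mim_cut e S = 0.
Proof.
move=> e0; apply/eqP; rewrite -leqn0; apply: mim_cut_le => M HM.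
rewrite leqn0 cards_eq0; apply/eqP/setP => p; rewrite in_set0.
by apply/negP => /(induced_matching_edge HM) [_ _]; apply/negP.
Qed.

Definition far (x y : T) : bool := [&& x != y, ~~ e x y & ~~ e y x].

Definition cut_matching (s : T -> nat) m (X : {set T}) t :=
  exists M, [/\ induced_matching e [set x | s x < t] M, #|M| = m &
                forall p, p \in M -> (p.1 \in X) && (p.2 \in X)].

Definition forces_matching m (X : {set T}) :=
  forall s : T -> nat, injective s -> exists t, cut_matching s m X t.

(* Connectivity of the subgraph induced by [Y], phrased through cuts. *)
Definition cut_connected (Y : {set T}) := forall S : {set T},
  (exists2 a, a \in Y & a \in S) -> (exists2 b, b \in Y & b \notin S) ->
  exists a b, [/\ a \in Y, b \in Y, a \in S, b \notin S & e a b].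

Lemma cut_matching0 s t : cut_matching s 0 set0 t.
Proof.
exists set0; split; [exact: induced_matching0 | exact: cards0 |].
by move=> p; rewrite in_set0.
Qed.

Lemma cut_matchingS s m (X Y : {set T}) t :
  X \subset Y -> cut_matching s m X t -> cut_matching s m Y t.
Proof.
move=> /subsetP sXY [M [HM cM HX]]; exists M; split=> // p /HX.
by case/andP=> /sXY-> /sXY->.
Qed.

Lemma cut_matching_straddle s m (X : {set T}) t : 0 < m ->
  cut_matching s m X t -> exists a b, [/\ a \in X, b \in X, s a < t & t <= s b].
Proof.
move=> m_gt0 [M [HM cM HX]]; have /card_gt0P [p pM] : 0 < #|M| by rewrite cM.
have [] := induced_matching_edge HM pM; rewrite !inE -leqNgt => p1 p2 _.
by case/andP: (HX p pM) => X1 X2; exists p.1, p.2.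
Qed.

(* The new matching edge is the edge of [Y] crossing the cut; it is far from
   all of [X], so it keeps the matching induced. *)
Lemma cut_matching_extend s m (X Y : {set T}) t :
  cut_matching s m X t -> cut_connected Y ->
  (exists2 a, a \in Y & s a < t) -> (exists2 b, b \in Y & t <= s b) ->
  (forall x y, x \in X -> y \in Y -> far x y) -> cut_matching s m.+1 (X :|: Y) t.
Proof.
move=> [M [HM cM HX]] cY [a0 a0Y a0t] [b0 b0Y b0t] XY_far.
have [||a [b [aY bY aS bS eab]]] := cY [set x | s x < t].
- by exists a0; rewrite ?inE.
- by exists b0; rewrite ?inE -?leqNgt.
have farM q : q \in M -> [&& q.1 != a, q.2 != b, ~~ e q.1 b & ~~ e a q.2].
  case/HX/andP=> q1 q2.
  case/and3P: (XY_far _ _ q1 aY) => -> _ _; case/and3P: (XY_far _ _ q2 bY) => -> _ _.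
  by case/and3P: (XY_far _ _ q1 bY) => _ -> _; case/and3P: (XY_far _ _ q2 aY) => _ _ ->.
have abM : (a, b) \notin M by apply/negP => /farM; rewrite !eqxx.
exists ((a, b) |: M); split; last 2 first.
- by rewrite cardsU1 abM cM.
- move=> p /setU1P [->|/HX /andP [p1 p2]]; first by rewrite /= !inE aY bY !orbT.
  by rewrite !inE p1 p2.
case/andP: HM => /forall_inP H1 /forall_inP H2.
apply/andP; split.
  by apply/forall_inP => p /setU1P [->|/H1//]; rewrite /= aS bS eab.
apply/forall_inP => p /setU1P Hp; apply/forall_inP => q /setU1P Hq.
case: Hp Hq => [->|pM] [->|qM]; first by rewrite eqxx.
- by case/and4P: (farM q qM) => /= h1 h2 h3 h4; rewrite (eq_sym a) (eq_sym b) h1 h2 h3 h4 implybT.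
- by case/and4P: (farM p pM) => h1 h2 h3 h4; rewrite /= h1 h2 h3 h4 implybT.
- exact: (forall_inP (H2 p pM)).
Qed.

Lemma cut_connected1 x : cut_connected [set x].
Proof. by move=> S [a /set1P-> aS] [b /set1P-> bS]; rewrite aS in bS. Qed.

Lemma cut_connected_split (A B S : {set T}) :
  cut_connected A -> (exists2 a, a \in A & a \in S) -> (exists2 b, b \in A & b \notin S) ->
  exists a b, [/\ a \in A :|: B, b \in A :|: B, a \in S, b \notin S & e a b].
Proof.
move=> cA inS outS; have [a [b [aA bA aS bS eab]]] := cA S inS outS.
by exists a, b; rewrite !in_setU aA bA.
Qed.

Hypothesis e_sym : symmetric e.

Lemma cut_connectedU (A B : {set T}) x y : cut_connected A -> cut_connected B ->
  x \in A -> y \in B -> e x y -> cut_connected (A :|: B).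
Proof.
move=> cA cB xA yB exy S [a + aS] [b + bS].
case: (boolP [exists c in A, c \in S]) => [/exists_inP inA|].
  case: (boolP [exists c in A, c \notin S]) => [/exists_inP outA _ _|].
    exact: cut_connected_split.
  rewrite negb_exists_in => /forall_inP /(_ _ _) /negbNE AS aAB bAB.
  have bB : b \in B by case/setUP: bAB => // /AS; rewrite (negbTE bS).
  case: (boolP [exists c in B, c \in S]) => [/exists_inP inB|].
    by rewrite setUC; apply: cut_connected_split => //; exists b.
  rewrite negb_exists_in => /forall_inP /(_ _ yB) yS.
  by exists x, y; rewrite !in_setU xA yB orbT AS.
rewrite negb_exists_in => /forall_inP AS aAB bAB.
have aB : a \in B by case/setUP: aAB => // /AS; rewrite aS.
case: (boolP [exists c in B, c \notin S]) => [/exists_inP outB|].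
  by rewrite setUC; apply: cut_connected_split => //; exists a.
rewrite negb_exists_in => /forall_inP /(_ _ yB) /negbNE yS.
by exists y, x; rewrite !in_setU xA yB orbT e_sym (AS _ xA).
Qed.

End InducedMatchings.

Lemma cut_connected_imset (U T : finType) (eU : rel U) (eT : rel T) (f : U -> T) Y :
  (forall x y, eU x y -> eT (f x) (f y)) -> cut_connected eU Y -> cut_connected eT (f @: Y).
Proof.
move=> fe cY S [_ /imsetP [a aY ->] aS] [_ /imsetP [b bY ->] bS].
have [||c [d [cY' dY cS dS ecd]]] := cY (f @^-1: S).
- by exists a; rewrite ?inE.
- by exists b; rewrite ?inE.
move: cS dS; rewrite !inE => cS dS.
by exists (f c), (f d); split; rewrite ?imset_f ?fe.
Qed.

Section Embedding.
Variables (U T : finType) (eU : rel U) (eT : rel T) (f : U -> T).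
Hypotheses (f_inj : injective f) (f_edge : forall x y, eT (f x) (f y) = eU x y).
Variables (SU : {set U}) (ST : {set T}).
Hypothesis f_cut : forall x, (f x \in ST) = (x \in SU).

Definition map_pair (p : U * U) : T * T := (f p.1, f p.2).

Lemma map_pair_inj : injective map_pair.
Proof. by move=> [a b] [c d] [/f_inj-> /f_inj->]. Qed.

Lemma induced_matching_image M :
  induced_matching eU SU M -> induced_matching eT ST (map_pair @: M).
Proof.
case/andP=> /forall_inP H1 /forall_inP H2; apply/andP; split.
  by apply/forall_inP => _ /imsetP [p /H1 pM ->]; rewrite /= !f_cut f_edge.
apply/forall_inP => _ /imsetP [p pM ->]; apply/forall_inP => _ /imsetP [q qM ->].
rewrite (inj_eq map_pair_inj) /= !(inj_eq f_inj) !f_edge.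
exact: (forall_inP (H2 p pM)).
Qed.

Lemma induced_matching_preimage M : induced_matching eT ST M ->
  induced_matching eU SU (map_pair @^-1: M).
Proof.
case/andP=> /forall_inP H1 /forall_inP H2; apply/andP; split.
  by apply/forall_inP => p; rewrite inE => /H1; rewrite /= !f_cut f_edge.
apply/forall_inP => p; rewrite inE => pM; apply/forall_inP => q; rewrite inE => qM.
have := forall_inP (H2 _ pM) _ qM.
by rewrite (inj_eq map_pair_inj) /= !(inj_eq f_inj) !f_edge.
Qed.

Lemma card_preimset_pairs (M : {set T * T}) :
  (forall q, q \in M -> exists p, q = map_pair p) -> #|map_pair @^-1: M| = #|M|.
Proof.
move=> onto; rewrite -(card_imset _ map_pair_inj); apply: eq_card => q.
apply/imsetP/idP => [[p] | /[dup] qM /onto [p Eq]]; first by rewrite inE => pM ->.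
by exists p; rewrite // inE -Eq.
Qed.

Lemma mim_cut_embed : mim_cut eU SU <= mim_cut eT ST.
Proof.
apply: mim_cut_le => M /induced_matching_image /mim_cut_ge.
by rewrite (card_imset _ map_pair_inj).
Qed.

End Embedding.

Section Transfer.
Variables (U T : finType) (eU : rel U) (eT : rel T) (f : U -> T).
Hypotheses (f_inj : injective f) (f_edge : forall x y, eT (f x) (f y) = eU x y).

Lemma forces_matching_imset m X :
  forces_matching eU m X -> forces_matching eT m (f @: X).
Proof.
move=> force s s_inj; have [|t [M [HM cM HX]]] := force (s \o f).
  by move=> x y /s_inj /f_inj.
exists t, (map_pair f @: M); split.
- by apply: induced_matching_image HM => // x; rewrite !inE.
- by rewrite (card_imset _ (map_pair_inj f_inj)).
by move=> _ /imsetP [p /HX /andP [p1 p2] ->]; rewrite /= !(imset_f f).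
Qed.

(* Vertices outside the image of [f] are ranked below all others, so that the
   cuts of the extended ranking restrict to cuts of the original one. *)
Lemma forces_matching_preimset m (X : {set T}) : X \subset codom f ->
  forces_matching eT m X -> forces_matching eU m (f @^-1: X).
Proof.
move=> /subsetP Xf force s s_inj.
pose s' y := if [pick x | f x == y] is Some x then #|T| + s x else enum_rank y.
have s'f x : s' (f x) = #|T| + s x.
  by rewrite /s'; case: pickP => [x' /eqP /f_inj-> // | /(_ x)]; rewrite eqxx.
have s'_inj : injective s'.
  move=> y y'; rewrite /s'.
  case: pickP => [x /eqP<- | _]; case: pickP => [x' /eqP<- | _] //.
  - by move/addnI/s_inj->.
  - by move=> E; exfalso; have : enum_rank y' < #|T| := ltn_ord _; lia.
  - by move=> E; exfalso; have : enum_rank y < #|T| := ltn_ord _; lia.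
  - by move/val_inj/enum_rank_inj.
have [t [M [HM <- HX]]] := force s' s'_inj.
have onto q : q \in M -> exists p, q = map_pair f p.
  by case: q => y y' /HX /andP /= [/Xf/codomP [a ->] /Xf/codomP [b ->]]; exists (a, b).
exists (t - #|T|), (map_pair f @^-1: M); split.
- by apply: induced_matching_preimage HM => // x; rewrite !inE s'f; lia.
- exact: card_preimset_pairs.
by move=> p; rewrite !inE => /HX.
Qed.

End Transfer.

Lemma leq_bigminn (I : finType) (P : pred I) (F : I -> nat) x0 m :
  m <= x0 -> (forall i, P i -> m <= F i) -> m <= \big[minn/x0]_(i | P i) F i.
Proof.
move=> m_x0 mF; apply: (big_ind (fun x => m <= x)) => // x y mx my.
by rewrite leq_min mx my.
Qed.

Lemma geq_bigminn_cond (I : finType) (P : pred I) (F : I -> nat) x0 i0 :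
  P i0 -> \big[minn/x0]_(i | P i) F i <= F i0.
Proof.
move=> Pi0; rewrite -big_filter.
have : i0 \in [seq i <- index_enum I | P i] by rewrite mem_filter Pi0 mem_index_enum.
elim: [seq _ <- _ | _] => //= j r IHr; rewrite in_cons big_cons.
by case/predU1P => [-> | /IHr]; [apply: geq_minl | apply/leq_trans/geq_minr].
Qed.

Section LinearMimWidth.
Variables (T : finType) (e : rel T).

Lemma layout_enum_rank : layout [ffun x : T => enum_rank x].
Proof. by apply/injectiveP => x y; rewrite !ffunE => /enum_rank_inj. Qed.

Lemma mim_width_le_card s : mim_width e s <= #|T|.
Proof. by apply/bigmax_leqP => i _; apply: mim_cut_le_card. Qed.

Lemma mim_width_ge (s : {ffun T -> 'I_#|T|}) t M :
  induced_matching e [set x | s x < t] M -> #|M| <= mim_width e s.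
Proof.
move=> HM; have [-> | [p pM]] := set_0Vmem M; first by rewrite cards0.
have [] := induced_matching_edge HM pM; rewrite !inE -leqNgt => p1 p2 _.
have t_lt : t < #|T| by apply: leq_ltn_trans p2 _.
apply: leq_trans (mim_cut_ge HM) _.
have -> : [set x | s x < t] = prefix_set s (Ordinal t_lt) by [].
apply: (leq_bigmax_cond (F := fun i : 'I_#|T| => mim_cut e (prefix_set s i))).
exact: leq_ltn_trans (leq0n _) p1.
Qed.

Lemma lmw_ge m X : forces_matching e m X -> m <= lmw e.
Proof.
move=> force.
have mw_ge s : layout s -> m <= mim_width e s.
  move=> /injectiveP s_inj; have [|t [M [HM <- _]]] := force (fun x => s x).
    by move=> x y /val_inj /s_inj.
  exact: mim_width_ge HM.
apply: (leq_bigminn _ mw_ge).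
exact: leq_trans (mw_ge _ layout_enum_rank) (mim_width_le_card _).
Qed.

Lemma cut_of_downward_closed (r : T -> nat) (D : {set T}) : injective r ->
  (forall x y, x \in D -> r y < r x -> y \in D) -> D = [set x | r x < \max_(y in D) (r y).+1].
Proof.
move=> r_inj down; apply/setP => x; rewrite inE; apply/idP/idP => [xD|].
  exact: (leq_bigmax_cond (F := fun y => (r y).+1)).
case: (boolP [exists y in D, r x <= r y]) => [/exists_inP [y yD rxy] _ | noy].
  by move: rxy; rewrite leq_eqVlt => /predU1P [/r_inj-> // | /(down y x yD)].
move: noy; rewrite negb_exists_in => /forall_inP noy.
rewrite ltnNge => /negP []; apply/bigmax_leqP => y yD.
by have := noy _ yD; rewrite -ltnNge.
Qed.

Lemma lmw_le_ranking (r : T -> nat) K : injective r ->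
  (forall t, mim_cut e [set x | r x < t] <= K) -> lmw e <= K.
Proof.
move=> r_inj cutK.
pose rank x := #|[set y | r y < r x]|.
have rank_lt x : rank x < #|T|.
  by apply/proper_card/properP; split; [apply/subsetP | exists x; rewrite ?inE ?ltnn].
have rank_mono x y : r x < r y -> rank x < rank y.
  move=> rxy; apply/proper_card/properP; split; last by exists x; rewrite !inE ?ltnn.
  by apply/subsetP => z; rewrite !inE => /ltn_trans; apply.
have rank_inj : injective rank.
  move=> x y Exy; apply: r_inj.
  by case: (ltngtP (r x) (r y)) => // /rank_mono; rewrite Exy ltnn.
pose s := [ffun x => Ordinal (rank_lt x)].
have s_layout : layout s by apply/injectiveP => x y; rewrite !ffunE => -[/rank_inj].
apply: leq_trans (geq_bigminn_cond _ _ s_layout) _; apply/bigmax_leqP => i _.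
rewrite (@cut_of_downward_closed r (prefix_set s i)) // => x y.
by rewrite !inE !ffunE /= => xi /rank_mono /ltn_trans; apply.
Qed.

End LinearMimWidth.

Definition o0 : 'I_3 := @Ordinal 3 0 isT.
Definition o1 : 'I_3 := @Ordinal 3 1 isT.
Definition o2 : 'I_3 := @Ordinal 3 2 isT.

Lemma ord3P (i : 'I_3) : [\/ i = o0, i = o1 | i = o2].
Proof.
by case: i => [[|[|[|i]]] Hi] //; [apply: Or31 | apply: Or32 | apply: Or33]; apply: val_inj.
Qed.

Lemma ord_trichotomy n (i i' : 'I_n) : [\/ i < i', i = i' | i' < i].
Proof. by case: ltngtP => h; [apply: Or31 | apply: Or33 | apply/Or32/val_inj]. Qed.

Definition Hchild k (i : 'I_3) : Hv k.+1 := Some (i, None).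
Definition Hcopy k (i j : 'I_3) (z : Hv k) : Hv k.+1 := Some (i, Some (j, z)).
Arguments Hchild {k}.
Arguments Hcopy {k}.

Lemma Hchild_neq_copy k i i' j (z : Hv k) : Hchild i != Hcopy i' j z.
Proof. by apply/eqP. Qed.

Notation Hsq k := (sq_graph (@Hadj k)).

Lemma Hadj_sym k : symmetric (@Hadj k).
Proof.
elim: k => [//|k IH] [[i [[j z]|]]|] [[i' [[j' z']|]]|] //=.
by rewrite (eq_sym i) (eq_sym j) IH.
Qed.

Lemma Hadj_irr k (x : Hv k) : Hadj x x = false.
Proof. by elim: k x => [//|k IH] [[i [[j z]|]]|] //=; rewrite IH !andbF. Qed.

Lemma Hcopy_inj k i j : injective (@Hcopy k i j).
Proof. by move=> x y [->]. Qed.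

Lemma Hadj_copy k i j (x y : Hv k) : Hadj (Hcopy i j x) (Hcopy i j y) = Hadj x y.
Proof. by rewrite /= !eqxx. Qed.

Lemma Hsq_sym k : symmetric (Hsq k).
Proof.
move=> x y; rewrite /sq_graph eq_sym Hadj_sym; congr (_ && (_ || _)).
by apply/existsP/existsP => -[z /andP [xz zy]]; exists z; rewrite Hadj_sym zy Hadj_sym.
Qed.

Lemma Hadj_sq k (x y : Hv k) : Hadj x y -> Hsq k x y.
Proof.
move=> xy; rewrite /sq_graph xy andbT; apply: contraTneq xy => ->.
by rewrite Hadj_irr.
Qed.

Section SquareAdjacency.
Variable k : nat.
Local Notation r0 := (Hroot k).
Local Notation u := (Hroot k.+1).

Lemma Hsq_copy_copy i j z i' j' z' :
  Hsq k.+1 (Hcopy i j z) (Hcopy i' j' z') =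
  (i == i') && (if j == j' then Hsq k z z' else (z == r0) && (z' == r0)).
Proof.
have path2 : [exists w, Hadj (Hcopy i j z) w && Hadj w (Hcopy i' j' z')] =
  (i == i') && ((z == r0) && (z' == r0) || (j == j') && [exists w, Hadj z w && Hadj w z']).
  apply/existsP/idP => [[[[i1 [[j1 w]|]]|]] //= | ].
  - case/andP=> /and3P [/eqP<- /eqP<- zw] /and3P [/eqP-> /eqP-> wz'].
    by rewrite !eqxx /=; apply/orP; right; apply/existsP; exists w; rewrite zw.
  - by case/andP=> /andP [/eqP-> /eqP->] /andP [/eqP-> /eqP->]; rewrite !eqxx.
  case/andP=> /eqP<- /orP [/andP [/eqP-> /eqP->] | /andP [/eqP<- /existsP [w]]].
    by exists (Hchild i); rewrite /= !eqxx.
  by case/andP=> zw wz'; exists (Hcopy i j w); rewrite /= !eqxx zw.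
rewrite /sq_graph path2 /=.
case: (eqVneq i i') => [<- | ni] /=; last by rewrite andbF.
case: (eqVneq j j') => [<- | nj] /=.
  rewrite (inj_eq (@Hcopy_inj k i j)).
  case: (eqVneq z z') => [<- | nz] //=.
  case: (eqVneq z r0) => [ez|] //=; case: (eqVneq z' r0) => [ez'|] //=.
  by rewrite ez ez' eqxx in nz.
have -> : Hcopy i j z != Hcopy i j' z' by apply/eqP => -[/eqP]; rewrite (negbTE nj).
by rewrite /= orbF.
Qed.

Lemma Hsq_copy i j (x y : Hv k) : Hsq k.+1 (Hcopy i j x) (Hcopy i j y) = Hsq k x y.
Proof. by rewrite Hsq_copy_copy !eqxx. Qed.

Lemma Hsq_root_copy i j z : Hsq k.+1 u (Hcopy i j z) = (z == r0).
Proof.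
rewrite /sq_graph /=; apply/existsP/idP => [[[[i1 [[j1 w]|]]|]] //= | /eqP->].
  by case/andP=> _ /eqP->.
by exists (Hchild i); rewrite /= !eqxx.
Qed.

Lemma Hsq_copy_root i j z : Hsq k.+1 (Hcopy i j z) u = (z == r0).
Proof. by rewrite Hsq_sym Hsq_root_copy. Qed.

Lemma Hsq_root_child i : Hsq k.+1 u (Hchild i).
Proof. by []. Qed.

Lemma Hsq_child_root i : Hsq k.+1 (Hchild i) u.
Proof. by []. Qed.

Lemma Hsq_child_child i i' : Hsq k.+1 (Hchild i) (Hchild i') = (i != i').
Proof.
rewrite /sq_graph /=; case: (eqVneq i i') => [<- | ni]; first by rewrite eqxx.
have -> : Hchild i != Hchild i' :> Hv k.+1 by apply/eqP => -[/eqP]; rewrite (negbTE ni).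
by apply/existsP; exists u.
Qed.

Lemma Hsq_child_copy i i' j z :
  Hsq k.+1 (Hchild i) (Hcopy i' j z) = (i == i') && ((z == r0) || Hadj r0 z).
Proof.
rewrite /sq_graph Hchild_neq_copy /=; case: (eqVneq i i') => [<- | ni] /=.
  case: (eqVneq z r0) => [-> | nz] //=.
  apply/existsP/idP => [[[[i1 [[j1 w]|]]|]] //= | rz].
    by case/andP=> /andP [_ /eqP->] /and3P [_ _ ->].
  by exists (Hcopy i j r0); rewrite /= !eqxx.
apply/negbTE; rewrite negb_exists; apply/forallP => -[[i1 [[j1 w]|]]|] //=.
by apply/negP => /andP [/andP [/eqP<- _] /and3P [/eqP E _ _]]; rewrite E eqxx in ni.
Qed.

Lemma Hsq_copy_child i i' j z :
  Hsq k.+1 (Hcopy i' j z) (Hchild i) = (i == i') && ((z == r0) || Hadj r0 z).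
Proof. by rewrite Hsq_sym Hsq_child_copy. Qed.

End SquareAdjacency.

(* The layout of H(k+1): the block of v_i has width [3N+2], where [N] bounds the
   positions in H(k); it lists the three copies of H(k) below v_i, then v_i.
   The root comes right after v_0. *)
Fixpoint Hpos_bound k := if k is k'.+1 then 3 * (3 * Hpos_bound k' + 2) else 1.

Fixpoint Hpos k : Hv k -> nat :=
  match k return Hv k -> nat with
  | 0 => fun _ => 0
  | k'.+1 => fun x =>
    match x with
    | None => 3 * Hpos_bound k' + 1
    | Some (i, None) => i * (3 * Hpos_bound k' + 2) + 3 * Hpos_bound k'
    | Some (i, Some (j, z)) => i * (3 * Hpos_bound k' + 2) + j * Hpos_bound k' + Hpos z
    end
  end.

Lemma Hpos_lt k (x : Hv k) : Hpos x < Hpos_bound k.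
Proof.
elim: k x => [//|k IH] [[[[|[|[|i]]] Hi] [[[[|[|[|j]]] Hj] z]|]]|] //=;
  try have := IH z; lia.
Qed.

Lemma Hpos_inj k : injective (@Hpos k).
Proof.
elim: k => [[] [] //|k IH] x y; have zN := @Hpos_lt k.
case: x => [[[[|[|[|i]]] Hi] [[[[|[|[|j]]] Hj] z]|]]|] //;
case: y => [[[[|[|[|i']]] Hi'] [[[[|[|[|j']]] Hj'] z']|]]|] //= E;
  try have := zN z; try have := zN z'; try lia.
all: try (have Ez : z = z' by apply: IH; lia); try subst.
all: by rewrite ?(bool_irrelevance Hi Hi') ?(bool_irrelevance Hj Hj').
Qed.

Section Positions.
Variable k : nat.
Local Notation u := (Hroot k.+1).
Local Notation N := (Hpos_bound k).

Lemma Hpos_root : Hpos u = 3 * N + 1. Proof. by []. Qed.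
Lemma Hpos_child i : Hpos (@Hchild k i) = i * (3 * N + 2) + 3 * N. Proof. by []. Qed.
Lemma Hpos_copy i j (z : Hv k) : Hpos (Hcopy i j z) = i * (3 * N + 2) + j * N + Hpos z.
Proof. by []. Qed.

Lemma Hpos_copy_child i j (z : Hv k) : Hpos (Hcopy i j z) < Hpos (@Hchild k i).
Proof.
rewrite Hpos_copy Hpos_child; have := Hpos_lt z.
by case: i j => [[|[|[|i]]] Hi] [[|[|[|j]]] Hj] //=; lia.
Qed.

Lemma Hpos_child_mono (i i' : 'I_3) : i < i' -> Hpos (@Hchild k i) < Hpos (@Hchild k i').
Proof. by rewrite !Hpos_child; case: i i' => [[|[|[|i]]] Hi] [[|[|[|i']]] Hi'] //=; lia. Qed.

Lemma Hpos_child_copy (i i' : 'I_3) j (z : Hv k) :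
  i < i' -> Hpos (@Hchild k i) < Hpos (Hcopy i' j z).
Proof.
rewrite Hpos_copy Hpos_child.
by case: i i' j => [[|[|[|i]]] Hi] [[|[|[|i']]] Hi'] [[|[|[|j]]] Hj] //=; lia.
Qed.

Lemma Hpos_copy_mono (i i' : 'I_3) j j' (z z' : Hv k) : i < i' ->
  Hpos (Hcopy i j z) < Hpos (Hcopy i' j' z').
Proof. by move=> lt_ii'; apply: ltn_trans (Hpos_copy_child _ _ _) (Hpos_child_copy _ _ lt_ii'). Qed.

Lemma Hpos_child0_root (i : 'I_3) : val i = 0 -> Hpos (@Hchild k i) < Hpos u.
Proof. by rewrite Hpos_child Hpos_root => ->; lia. Qed.

Lemma Hpos_copy0_root (i : 'I_3) j (z : Hv k) : val i = 0 -> Hpos (Hcopy i j z) < Hpos u.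
Proof. by move=> i0; apply: ltn_trans (Hpos_copy_child _ _ _) (Hpos_child0_root i0). Qed.

Lemma Hpos_root_child (i : 'I_3) : 0 < i -> Hpos u < Hpos (@Hchild k i).
Proof. by rewrite Hpos_child Hpos_root; case: i => [[|[|[|i]]] Hi] //=; lia. Qed.

Lemma Hpos_root_copy (i : 'I_3) j (z : Hv k) : 0 < i -> Hpos u < Hpos (Hcopy i j z).
Proof.
rewrite Hpos_copy Hpos_root.
by case: i j => [[|[|[|i]]] Hi] [[|[|[|j]]] Hj] //=; lia.
Qed.

Lemma cut_copy_unique (i j i' j' : 'I_3) (z1 z2 w1 w2 : Hv k) t :
  Hpos (Hcopy i j z1) < t -> t <= Hpos (Hcopy i j z2) ->
  Hpos (Hcopy i' j' w1) < t -> t <= Hpos (Hcopy i' j' w2) -> (i == i') && (j == j').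
Proof.
rewrite !Hpos_copy; have := Hpos_lt z1; have := Hpos_lt z2.
have := Hpos_lt w1; have := Hpos_lt w2.
by case: i j i' j' => [[|[|[|i]]] Hi] [[|[|[|j]]] Hj] [[|[|[|i']]] Hi'] [[|[|[|j']]] Hj'] //=; lia.
Qed.

End Positions.

Definition crossing (T : finType) (r : T -> nat) (e : rel T) t (p : T * T) :=
  [&& r p.1 < t, t <= r p.2 & e p.1 p.2].

Definition same_copy k (p : Hv k.+1 * Hv k.+1) : bool :=
  if p is (Some (i, Some (j, _)), Some (i', Some (j', _))) then (i == i') && (j == j')
  else false.

(* The edges of an induced matching lying inside copies of H(k) all lie in a
   single copy, so they are bounded by the cut width [K] of H(k); the remaining
   edges are sorted into [c] classes, each of which contains at most one of them. *)
Lemma mim_cut_Hpos_succ k (e1 : rel (Hv k.+1)) (e0 : rel (Hv k)) K c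
    (cls : Hv k.+1 * Hv k.+1 -> 'I_c) :
  (forall i j z z', e1 (Hcopy i j z) (Hcopy i j z') = e0 z z') ->
  (forall t, mim_cut e0 [set x | Hpos x < t] <= K) ->
  (forall t p q, crossing (@Hpos _) e1 t p -> crossing (@Hpos _) e1 t q ->
     ~~ same_copy p -> ~~ same_copy q -> cls p = cls q -> p != q -> conflict e1 p q) ->
  forall t, mim_cut e1 [set x | Hpos x < t] <= K + c.
Proof.
move=> e1_copy cutK top_conflict t; apply: mim_cut_le => M HM.
have crossM p : p \in M -> crossing (@Hpos _) e1 t p.
  by case/(induced_matching_edge HM); rewrite !inE -leqNgt /crossing => -> -> ->.
rewrite -(cardsID [set p | same_copy p] M); apply: leq_add.
  have [-> | [[x y]]] := set_0Vmem (M :&: [set p | same_copy p]); first by rewrite cards0.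
  rewrite !inE => /andP [/crossM /and3P [/= x_t t_y _]].
  case: x y x_t t_y => [[i [[j z]|]]|] // [[i' [[j' z']|]]|] //= x_t t_y.
  case/andP=> /eqP ii' /eqP jj'; subst i' j'.
  have in_copy q : q \in M :&: [set p | same_copy p] -> exists p, q = map_pair (Hcopy i j) p.
    rewrite !inE => /andP [/[dup] /crossM /and3P [q1 q2 _]].
    case: q q1 q2 => [[[a [[b w]|]]|] [[a' [[b' w']|]]|]] //= q1 q2 _ /andP [/eqP aa' /eqP bb'].
    subst a' b'; case/andP: (cut_copy_unique q1 q2 x_t t_y) => /eqP-> /eqP->.
    by exists (w, w').
  pose lo := i * (3 * Hpos_bound k + 2) + j * Hpos_bound k.
  have cut_copy (w : Hv k) :
      (Hcopy i j w \in [set x | Hpos x < t]) = (w \in [set w | Hpos w < t - lo]).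
    by rewrite !inE Hpos_copy /lo; lia.
  have HM' := induced_matching_preimage (@Hcopy_inj k i j) (e1_copy i j) cut_copy
    (induced_matchingS (subsetIl M [set p | same_copy p]) HM).
  rewrite -(card_preimset_pairs (@Hcopy_inj k i j) in_copy).
  exact: leq_trans (mim_cut_ge HM') (cutK (t - lo)).
rewrite -[c]card_ord -(@card_in_imset _ _ cls) ?max_card //.
move=> p q; rewrite !inE => /andP [np pM] /andP [nq qM] Epq; apply/eqP/negPn/negP => npq.
have := top_conflict t p q (crossM _ pM) (crossM _ qM) np nq Epq npq.
by apply/negP; apply: induced_matching_conflict HM pM qM npq.
Qed.

Section TreeTop.
Variable k : nat.
Local Notation r0 := (Hroot k).
Local Notation u := (Hroot k.+1).

Lemma Hadj_top_crossing t (p : Hv k.+1 * Hv k.+1) :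
  crossing (@Hpos _) (@Hadj _) t p -> ~~ same_copy p ->
  [\/ exists2 i : 'I_3, p = (u, Hchild i) & 0 < i, p = (Hchild o0, u)
    | exists i j, p = (Hcopy i j r0, Hchild i)].
Proof.
case: p => [[[i [[j z]|]]|] [[i' [[j' z']|]]|]] /and3P [/= p1 p2 e12] //= not_same.
- by case/and3P: e12 not_same => /eqP-> /eqP-> _; rewrite !eqxx.
- by case/andP: e12 => /eqP<- /eqP->; apply: Or33; exists i', j.
- case/andP: e12 => /eqP ii' /eqP z'r; subst i' z'.
  by have /= := Hpos_copy_child i j' r0; lia.
- apply: Or32; case: (posnP i) => [i0 | i_gt0]; first by congr (Some (_, _), _); apply: val_inj.
  by have /= := Hpos_root_child k i_gt0; lia.
- apply: Or31; exists i' => //; case: (posnP i') => // i0.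
  by have /= := Hpos_child0_root k i0; lia.
Qed.

Lemma Hadj_top_conflict t p q :
  crossing (@Hpos _) (@Hadj _) t p -> crossing (@Hpos _) (@Hadj _) t q ->
  ~~ same_copy p -> ~~ same_copy q -> p != q -> conflict (@Hadj k.+1) p q.
Proof.
move=> cp cq np nq.
case: (Hadj_top_crossing cp np) => [[i Ep i_gt0] | Ep | [i [j Ep]]];
case: (Hadj_top_crossing cq nq) => [[i' Eq i'_gt0] | Eq | [i' [j' Eq]]];
move: cp cq; rewrite Ep Eq => /and3P [/= p1 p2 _] /and3P [/= q1 q2 _] npq;
rewrite /conflict /= ?eqxx ?orbT //; try lia.
- case: (posnP i') => [i'0 | /(Hpos_root_copy j' r0) /=]; lia.
- case: (posnP i) => [i0 | /(Hpos_root_copy j r0) /=]; lia.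
- case: (ord_trichotomy i i') => [lt | <- | lt].
  + by have /= := Hpos_child_copy j' r0 lt; lia.
  + by rewrite eqxx orbT.
  + by have /= := Hpos_child_copy j r0 lt; lia.
Qed.

End TreeTop.

Section SquareTop.
Variable k : nat.
Local Notation r0 := (Hroot k).
Local Notation u := (Hroot k.+1).
Local Notation V := (Hv k.+1).

Inductive Hsq_top_shape (p : V * V) : Prop :=
| ShapeRootChild i of p = (u, Hchild i) & 0 < i
| ShapeChild12 of p = (Hchild o1, Hchild o2)
| ShapeRootCopy i j of p = (u, Hcopy i j r0) & 0 < i
| ShapeCopy0Root j of p = (Hcopy o0 j r0, u)
| ShapeCopyChild i j z of p = (Hcopy i j z, Hchild i) & (z == r0) || Hadj r0 z
| ShapeCopyCopy i j j' of p = (Hcopy i j r0, Hcopy i j' r0) & j != j'.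

Lemma Hsq_top_crossing t (p : V * V) : crossing (@Hpos _) (Hsq _) t p -> ~~ same_copy p ->
  p.1 != Hchild o0 -> Hsq_top_shape p.
Proof.
case: p => [[[i [[j z]|]]|] [[i' [[j' z']|]]|]] /and3P [/= p1 p2] //=.
- rewrite -/(Hcopy _ _ _) -/(Hcopy _ _ _) Hsq_copy_copy => /andP [/eqP<-].
  case: (eqVneq j j') => [<- _ | nj /andP [/eqP-> /eqP->] _ _]; first by rewrite !eqxx.
  exact: ShapeCopyCopy nj.
- by rewrite -/(Hcopy _ _ _) -/(Hchild _) Hsq_copy_child => /andP [/eqP<- zr] _ _;
    apply: ShapeCopyChild zr.
- rewrite -/(Hcopy _ _ _) -/u Hsq_copy_root => /eqP zr _ _; subst z.
  case: (posnP i) => [i0 | i_gt0]; last by have /= := Hpos_root_copy j r0 i_gt0; lia.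
  by rewrite (_ : i = o0); [apply: ShapeCopy0Root | apply: val_inj].
- rewrite -/(Hchild _) -/(Hcopy _ _ _) Hsq_child_copy => /andP [/eqP ii' _] _ _; subst i'.
  by have /= := Hpos_copy_child i j' z'; lia.
- rewrite -/(Hchild _) -/(Hchild _) Hsq_child_child => ni _ ni0.
  case: (ord_trichotomy i i') => [lt | eii' | lt].
  + case: (ord3P i) ni0 lt => ->; rewrite ?eqxx // => _;
      case: (ord3P i') => -> // _.
    exact: ShapeChild12.
  + by rewrite eii' eqxx in ni.
  + by have /= := Hpos_child_mono k lt; lia.
- case: (posnP i) => [i0 _ _ | i_gt0]; last by have /= := Hpos_root_child k i_gt0; lia.
  by rewrite (_ : i = o0) ?eqxx //; apply: val_inj.
- rewrite -/u -/(Hcopy _ _ _) Hsq_root_copy => /eqP z'r _ _; subst z'.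
  case: (posnP i') => [i'0 | ]; last exact: ShapeRootCopy.
  by have /= := Hpos_copy0_root j' r0 i'0; lia.
- move=> _ _ _; case: (posnP i') => [i'0 | ]; last exact: ShapeRootChild.
  by have /= := Hpos_child0_root k i'0; lia.
Qed.

Definition Hsq_class (p : V * V) : 'I_2 := if p.1 == Hchild o0 then ord_max else ord0.

(* Positions stay folded, so that [lia] treats them as atoms. *)
Local Arguments Hpos : simpl never.
Local Arguments Hroot : simpl never.

Lemma Hsq_top_conflict t p q :
  crossing (@Hpos _) (Hsq _) t p -> crossing (@Hpos _) (Hsq _) t q -> ~~ same_copy p ->
  ~~ same_copy q -> Hsq_class p = Hsq_class q -> p != q -> conflict (Hsq k.+1) p q.
Proof.
move=> cp cq np nq; rewrite /Hsq_class.
case: (eqVneq p.1 (Hchild o0)) => p1v; case: (eqVneq q.1 (Hchild o0)) => q1v // _ npq.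
  by rewrite /conflict p1v q1v eqxx.
case: (Hsq_top_crossing cp np p1v) =>
  [i Ep i_gt0 | Ep | i j Ep i_gt0 | j Ep | i j z Ep _ | i j j' Ep _];
case: (Hsq_top_crossing cq nq q1v) =>
  [i' Eq i'_gt0 | Eq | i' j2 Eq i'_gt0 | j2 Eq | i' j2 z2 Eq _ | i' j2 j2' Eq _];
move: cp cq npq; rewrite Ep Eq => /and3P [/= p1 p2 _] /and3P [/= q1 q2 _] npq;
rewrite /conflict /= ?Hsq_root_child ?Hsq_child_root ?Hsq_root_copy ?Hsq_copy_root
  ?Hsq_child_child ?Hsq_child_copy ?Hsq_copy_child ?Hsq_copy_copy ?eqxx ?orbT //.
(* In each remaining case the two edges either cannot cross the same cut, given
   the positions of their endpoints, or they share an endpoint or are joined. *)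
- exfalso; lia.
- case: (eqVneq o1 i') => [E | _]; last by rewrite /= !orbT.
  by exfalso; move: q2; rewrite -E; lia.
- have f0 := Hpos_copy_child o0 j2' r0; have f1 := Hpos_copy_child o1 j2' r0.
  have f01 := Hpos_child_mono k (isT : o0 < o1).
  by case: (ord3P i') q2 => -> q2; rewrite ?eqxx /= ?orbT //; exfalso; lia.
- exfalso; lia.
- exfalso; lia.
- exfalso; lia.
- case: (posnP i') => [i'0 | /(Hpos_root_copy j2 z2) f]; last by exfalso; lia.
  by rewrite (_ : i' = o0) ?eqxx /= ?orbT //; apply: val_inj.
- case: (eqVneq o1 i) => [E | _]; last by rewrite /= !orbT.
  by exfalso; move: p2; rewrite -E; lia.
- case: (posnP i) => [i0 | /(Hpos_root_copy j z) f]; last by exfalso; lia.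
  by rewrite (_ : i = o0) ?eqxx /= ?orbT //; apply: val_inj.
- case: (ord_trichotomy i i') => [lt | <- | lt]; rewrite ?eqxx /= ?orbT //.
    by have f := Hpos_child_copy j2 z2 lt; exfalso; lia.
  by have f := Hpos_child_copy j z lt; exfalso; lia.
- case: (ord_trichotomy i i') => [lt | <- | lt]; rewrite ?eqxx /= ?orbT //.
    by have f := Hpos_child_copy j2 r0 lt; exfalso; lia.
  by have f := Hpos_copy_mono j2' j r0 z lt; exfalso; lia.
- have f0 := Hpos_copy_child o0 j' r0; have f1 := Hpos_copy_child o1 j' r0.
  have f01 := Hpos_child_mono k (isT : o0 < o1).
  by case: (ord3P i) p2 => -> p2; rewrite ?eqxx /= ?orbT //; exfalso; lia.
- case: (ord_trichotomy i i') => [lt | <- | lt]; rewrite ?eqxx /= ?orbT //.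
    by have f := Hpos_copy_mono j' j2 r0 z2 lt; exfalso; lia.
  by have f := Hpos_child_copy j r0 lt; exfalso; lia.
- case: (ord_trichotomy i i') => [lt | ii' | lt].
  + by have f := Hpos_copy_mono j' j2 r0 r0 lt; exfalso; lia.
  + subst i'; rewrite eqxx; case: (eqVneq j2 j') => [jj | _]; last by rewrite !orbT.
    by subst j2; exfalso; lia.
  + by have f := Hpos_copy_mono j2' j r0 r0 lt; exfalso; lia.
Qed.

End SquareTop.

Lemma mim_cut_Hadj_le k t : mim_cut (@Hadj k) [set x | Hpos x < t] <= k.
Proof.
elim: k t => [|k IH] t; first by rewrite mim_cut_empty.
have := mim_cut_Hpos_succ (cls := fun=> @ord0 0) (@Hadj_copy k) IH.
rewrite addn1; apply=> {}t p q cp cq np nq _; exact: (Hadj_top_conflict cp cq np nq).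
Qed.

Lemma mim_cut_Hsq_le k t : mim_cut (Hsq k) [set x | Hpos x < t] <= 2 * k.
Proof.
elim: k t => [|k IH] t; first by rewrite mim_cut_empty // => x y; rewrite /sq_graph eqxx.
rewrite mulnSr; apply: (mim_cut_Hpos_succ (@Hsq_copy k) IH).
exact: Hsq_top_conflict.
Qed.

Lemma lmw_Hadj_le k : lmw (@Hadj k) <= k.
Proof. exact: lmw_le_ranking (@Hpos_inj k) (mim_cut_Hadj_le k). Qed.

Lemma lmw_Hsq_le k : lmw (Hsq k) <= 2 * k.
Proof. exact: lmw_le_ranking (@Hpos_inj k) (mim_cut_Hsq_le k). Qed.

Lemma lmw_Hsq_del_le k : lmw (del_vertex (Hsq k) (Hroot k)) <= 2 * k.
Proof.
apply: (@lmw_le_ranking _ _ (fun x => Hpos (val x))) => [x y /Hpos_inj /val_inj // | t].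
apply: leq_trans (mim_cut_Hsq_le k t).
by apply: (mim_cut_embed (f := val) val_inj) => // x; rewrite !inE.
Qed.

Definition Hcopyset k (i j : 'I_3) : {set Hv k.+1} := Hcopy i j @: [set: Hv k].
Definition Hbranch k (i : 'I_3) : {set Hv k.+1} :=
  [set Hchild i] :|: Hcopyset k i o0 :|: Hcopyset k i o1 :|: Hcopyset k i o2.

Lemma Hcopyset_in k i j (z : Hv k) : Hcopy i j z \in Hcopyset k i j.
Proof. exact: imset_f. Qed.

Lemma HcopysetP k i j (y : Hv k.+1) : y \in Hcopyset k i j -> exists z, y = Hcopy i j z.
Proof. by case/imsetP => z _ ->; exists z. Qed.

Lemma Hbranch_copy k i j (z : Hv k) : Hcopy i j z \in Hbranch k i.
Proof. by rewrite !inE; case: (ord3P j) => ->; rewrite Hcopyset_in ?orbT. Qed.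

Lemma Hcopyset_branch k i j : Hcopyset k i j \subset Hbranch k i.
Proof. by apply/subsetP => _ /imsetP [z _ ->]; apply: Hbranch_copy. Qed.

Lemma Hbranch_child k i : Hchild i \in Hbranch k i.
Proof. by rewrite !inE eqxx. Qed.

Lemma HbranchP k i (y : Hv k.+1) :
  y \in Hbranch k i -> y = Hchild i \/ exists j z, y = Hcopy i j z.
Proof.
rewrite !inE -!orbA => /or4P [/eqP-> | | |]; first by left.
all: by move/HcopysetP => [z ->]; right; do 2 eexists.
Qed.

Section BranchConnected.
Variables (k : nat) (e : rel (Hv k.+1)).
Hypothesis e_sym : symmetric e.
Hypothesis e_copy : forall i j x y, Hadj x y -> e (Hcopy i j x) (Hcopy i j y).
Hypothesis e_child_copy : forall i j, e (Hchild i) (Hcopy i j (Hroot k)).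

Lemma Hcopyset_connected i j :
  cut_connected (@Hadj k) setT -> cut_connected e (Hcopyset k i j).
Proof. exact: cut_connected_imset (e_copy i j). Qed.

Lemma Hbranch_connected i :
  cut_connected (@Hadj k) setT -> cut_connected e (Hbranch k i).
Proof.
move=> cH; rewrite /Hbranch.
have step j C : cut_connected e C -> Hchild i \in C -> cut_connected e (C :|: Hcopyset k i j).
  by move=> cC vC; apply: (cut_connectedU e_sym cC (Hcopyset_connected (j := j) cH) vC
    (Hcopyset_in i j (Hroot k)) (e_child_copy i j)).
by do 3 (apply: (step _ _); last by rewrite !inE eqxx); apply: cut_connected1.
Qed.

End BranchConnected.

Lemma Hadj_Hbranch_connected k i :
  cut_connected (@Hadj k) setT -> cut_connected (@Hadj k.+1) (Hbranch k i).
Proof.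
have e_copy i' j (x y : Hv k) : Hadj x y -> Hadj (Hcopy i' j x) (Hcopy i' j y).
  by rewrite Hadj_copy.
have e_child i' j : Hadj (Hchild i') (Hcopy i' j (Hroot k)) by rewrite /= !eqxx.
exact: (Hbranch_connected (@Hadj_sym _) e_copy e_child).
Qed.

Lemma Hadj_cut_connected k : cut_connected (@Hadj k) setT.
Proof.
elim: k => [|k IH].
  by rewrite (_ : setT = [set tt]); [apply: cut_connected1 | apply/setP => -[]; rewrite !inE].
have add_branch i C : cut_connected (@Hadj k.+1) C -> Hroot k.+1 \in C ->
    cut_connected (@Hadj k.+1) (C :|: Hbranch k i).
  move=> cC uC; apply: (cut_connectedU (@Hadj_sym _) cC (Hadj_Hbranch_connected (i := i) IH) uC).
  - exact: Hbranch_child.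
  - by [].
rewrite (_ : setT = [set Hroot k.+1] :|: Hbranch k o0 :|: Hbranch k o1 :|: Hbranch k o2).
  by do 3 (apply: (add_branch _ _); last by rewrite !inE eqxx); apply: cut_connected1.
apply/setP => x; rewrite inE 3!in_setU in_set1; apply/esym.
case: x => [[i [[j z]|]]|]; last by rewrite eqxx.
  by rewrite -/(Hcopy i j z); case: (ord3P i) => ->; rewrite Hbranch_copy ?orbT ?orTb.
by rewrite -/(Hchild i); case: (ord3P i) => ->; rewrite Hbranch_child ?orbT ?orTb.
Qed.

Lemma Hsq_Hbranch_connected k i : cut_connected (Hsq k.+1) (Hbranch k i).
Proof.
have e_copy i' j (x y : Hv k) : Hadj x y -> Hsq k.+1 (Hcopy i' j x) (Hcopy i' j y).
  by rewrite Hsq_copy; apply: Hadj_sq.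
have e_child i' j : Hsq k.+1 (Hchild i') (Hcopy i' j (Hroot k)) by rewrite Hsq_child_copy !eqxx.
exact: (Hbranch_connected (@Hsq_sym _) e_copy e_child (@Hadj_cut_connected k)).
Qed.

Lemma Hsq_Hcopyset_connected k i j : cut_connected (Hsq k.+1) (Hcopyset k i j).
Proof.
apply: (cut_connected_imset _ (@Hadj_cut_connected k)) => x y xy.
by rewrite Hsq_copy; apply: Hadj_sq.
Qed.

Lemma far_sub (T : finType) (e e' : rel T) x y :
  (forall x y, e x y -> e' x y) -> far e' x y -> far e x y.
Proof.
move=> ee' /and3P [xy nxy nyx].
by rewrite /far xy (contra (ee' x y) nxy) (contra (ee' y x) nyx).
Qed.

Lemma Hsq_far_branch k i i' j (w : Hv k) y :
  i != i' -> y \in Hbranch k i' -> far (Hsq k.+1) (Hcopy i j w) y.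
Proof.
move=> ii' /HbranchP [-> | [j' [z ->]]];
  rewrite /far ?Hsq_copy_child ?Hsq_child_copy ?Hsq_copy_copy.
  by rewrite (eq_sym i') (negbTE ii') /= andbT; apply/eqP.
rewrite (negbTE ii') (eq_sym i') (negbTE ii') andbT.
by apply/eqP => -[/eqP]; rewrite (negbTE ii').
Qed.

Lemma median3 (x : 'I_3 -> nat) :
  exists j j1 j2 : 'I_3, [/\ j1 != j, j2 != j, j1 != j2, x j1 <= x j & x j <= x j2].
Proof.
case: (leqP (x o0) (x o1)) => h01; case: (leqP (x o1) (x o2)) => h12;
case: (leqP (x o0) (x o2)) => h02; try lia.
- by exists o1, o0, o2.
- by exists o2, o0, o1; split=> //; apply: ltnW.
- by exists o0, o2, o1; split=> //; apply: ltnW.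
- by exists o0, o1, o2; split=> //; apply: ltnW.
- by exists o2, o1, o0; split=> //; apply: ltnW.
- by exists o1, o2, o0; split=> //; apply: ltnW.
Qed.

Lemma median_of_medians (p : 'I_3 -> 'I_3 -> nat) : exists a b j1 j2 c d jc jd : 'I_3,
  [/\ [&& j1 != b, j2 != b, j1 != j2, c != a, d != a & c != d],
      p a j1 <= p a b, p a b <= p a j2, p c jc <= p a b & p a b <= p d jd].
Proof.
have [f med_f] := fin_all_exists (fun i => median3 (p i)).
have [a [c [d [ca da cd le_ca le_ad]]]] := median3 (fun i => p i (f i)).
have [j1 [j2 [j1b j2b j12 le_1b le_b2]]] := med_f a.
by exists a, (f a), j1, j2, c, d, (f c), (f d); split; rewrite ?j1b ?j2b ?j12 ?ca ?da ?cd.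
Qed.

Lemma inj_ltn (T : finType) (s : T -> nat) x y :
  injective s -> s x <= s y -> x != y -> s x < s y.
Proof. by move=> s_inj; rewrite leq_eqVlt => /predU1P [/s_inj-> | //]; rewrite eqxx. Qed.

Section TreeLowerBound.
Variable k : nat.
Local Notation u := (Hroot k.+1).

(* The path from copy [j1] up through the root and down to copy [j2] crosses the
   cut and stays away from copy [j]. *)
Lemma Hadj_cut_matching_succ s m t (j j1 j2 : 'I_3) (X : {set Hv k.+1}) :
  j1 != j -> j2 != j -> cut_matching (@Hadj _) s m X t -> X \subset Hcopyset k j o0 ->
  (exists2 a, a \in Hcopyset k j1 o0 & s a < t) ->
  (exists2 b, b \in Hcopyset k j2 o0 & t <= s b) ->
  cut_matching (@Hadj _) s m.+1 setT t.
Proof.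
move=> j1j j2j cX /subsetP Xj [a aj1 sa] [b bj2 sb].
apply: (cut_matchingS (subsetT _)).
have cB i := Hadj_Hbranch_connected (i := i) (@Hadj_cut_connected k).
have cY : cut_connected (@Hadj k.+1) (Hbranch k j1 :|: [set u] :|: Hbranch k j2).
  apply: (cut_connectedU (@Hadj_sym _) _ (cB j2) _ (Hbranch_child k j2) (x := u)) => //.
    by apply: (cut_connectedU (@Hadj_sym _) (cB j1) (@cut_connected1 _ _ u)
      (Hbranch_child k j1) (set11 u) isT).
  by rewrite !inE eqxx orbT.
apply: (cut_matching_extend cX cY).
- by exists a; rewrite // 2!in_setU (subsetP (Hcopyset_branch _ _ _) _ aj1).
- by exists b; rewrite // in_setU (subsetP (Hcopyset_branch _ _ _) _ bj2) orbT.
move=> _ y /Xj /HcopysetP [w ->] /setUP [/setUP [] |].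
- by move=> yB; apply: (far_sub (@Hadj_sq _) (Hsq_far_branch _ _ _ yB)); rewrite eq_sym.
- by move/set1P->.
- by move=> yB; apply: (far_sub (@Hadj_sq _) (Hsq_far_branch _ _ _ yB)); rewrite eq_sym.
Qed.

End TreeLowerBound.

(* For every ranking, the three copies of H(k) hanging below the children force
   [k] at thresholds [f i]; at the median threshold the root path between the two
   other copies adds one edge. *)
Lemma Hadj_forces_matching k : forces_matching (@Hadj k.+1) k.+1 setT.
Proof.
elim: k => [|k IH] s s_inj.
  have [j [j1 [j2 [j1j j2j _ le1 le2]]]] := median3 (fun i => s (@Hcopy 0 i o0 tt)).
  exists (s (@Hcopy 0 j o0 tt)).
  apply: (Hadj_cut_matching_succ (X := set0) j1j j2j (cut_matching0 _ _ _)).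
  - exact: sub0set.
  - exists (@Hcopy 0 j1 o0 tt); first exact: Hcopyset_in.
    by apply: inj_ltn le1 _ => //; apply/eqP => -[/eqP]; rewrite (negbTE j1j).
  - by exists (@Hcopy 0 j2 o0 tt); first exact: Hcopyset_in.
have force i : forces_matching (@Hadj k.+2) k.+1 (Hcopyset k.+1 i o0).
  by apply: forces_matching_imset IH; [exact: Hcopy_inj | exact: Hadj_copy].
have [f cut_f] := fin_all_exists (fun i => force i s s_inj).
have [j [j1 [j2 [j1j j2j _ le1 le2]]]] := median3 f.
exists (f j); apply: (Hadj_cut_matching_succ j1j j2j (cut_f j)) => //.
- have [a [_ [aj1 _ sa _]]] := cut_matching_straddle (ltn0Sn _) (cut_f j1).
  by exists a => //; apply: leq_trans sa le1.
- have [_ [b [_ bj2 _ sb]]] := cut_matching_straddle (ltn0Sn _) (cut_f j2).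
  by exists b => //; apply: leq_trans le2 sb.
Qed.

Section SquareLowerBound.
Variable k : nat.
Local Notation r0 := (Hroot k).
Local Notation u := (Hroot k.+1).

Lemma Hsq_far_copies i j j' (w z : Hv k) :
  j != j' -> w != r0 -> far (Hsq k.+1) (Hcopy i j w) (Hcopy i j' z).
Proof.
move=> jj' wr; rewrite /far !Hsq_copy_copy eqxx (negbTE jj') (eq_sym j') (negbTE jj').
rewrite (negbTE wr) !andbF /= ?andbT.
by apply/eqP => -[/eqP]; rewrite (negbTE jj').
Qed.

(* Two sibling copies [j1], [j2] below [a] are joined through their adjacent
   roots, and the branches [c], [d] through their adjacent children; both cross
   the cut and are at distance at least three from [X] and from each other. *)
Lemma Hsq_cut_matching_succ2 s m t (a b j1 j2 c d : 'I_3) (X : {set Hv k.+1}) :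
  [&& j1 != b, j2 != b, j1 != j2, c != a, d != a & c != d] ->
  cut_matching (Hsq _) s m X t -> X \subset Hcopy a b @: [set w | w != r0] ->
  (exists2 x, x \in Hcopyset k a j1 & s x < t) ->
  (exists2 x, x \in Hcopyset k a j2 & t <= s x) ->
  (exists2 x, x \in Hbranch k c :|: Hbranch k d & s x < t) ->
  (exists2 x, x \in Hbranch k c :|: Hbranch k d & t <= s x) ->
  cut_matching (Hsq _) s m.+2 [set x | x != u] t.
Proof.
case/and5P=> j1b j2b j12 ca /andP [da cd] cX /subsetP Xab [y1 y1j1 sy1] [y2 y2j2 sy2] cd_lo cd_hi.
set Y := Hcopyset k a j1 :|: Hcopyset k a j2.
have below_a x : x \in X :|: Y -> exists j w, x = Hcopy a j w.
  by case/setUP => [/Xab/imsetP [w _ ->] | /setUP [] /HcopysetP [w ->]]; do 2 eexists.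
apply: (@cut_matchingS _ _ _ _ (X :|: Y :|: (Hbranch k c :|: Hbranch k d))).
  apply/subsetP => x; rewrite [x \in [set _ | _]]inE.
  by case/setUP => [/below_a [j [w ->]] | /setUP [] /HbranchP [-> | [j [w ->]]]]; apply/eqP.
apply: cut_matching_extend => //.
- apply: (cut_matching_extend cX).
  + apply: (cut_connectedU (@Hsq_sym _) (@Hsq_Hcopyset_connected k a j1)
      (@Hsq_Hcopyset_connected k a j2) (Hcopyset_in a j1 r0) (Hcopyset_in a j2 r0)).
    by rewrite Hsq_copy_copy eqxx (negbTE j12) !eqxx.
  + by exists y1; rewrite // inE y1j1.
  + by exists y2; rewrite // inE y2j2 orbT.
  + move=> x y /Xab /imsetP [w]; rewrite inE => wr -> /setUP [] /HcopysetP [z ->].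
      by apply: Hsq_far_copies; rewrite // eq_sym.
    by apply: Hsq_far_copies; rewrite // eq_sym.
- apply: (cut_connectedU (@Hsq_sym _) (@Hsq_Hbranch_connected k c) (@Hsq_Hbranch_connected k d)
    (Hbranch_child k c) (Hbranch_child k d)).
  by rewrite Hsq_child_child.
- move=> x y /below_a [j [w ->]] /setUP [] yB; apply: (Hsq_far_branch _ _ _ yB).
    by rewrite eq_sym.
  by rewrite eq_sym.
Qed.

End SquareLowerBound.

(* The same median argument, applied to the nine copies of H(k) below the
   children with their roots removed (a root would be too close to its siblings). *)
Lemma Hsq_forces_matching k :
  forces_matching (Hsq k.+1) (2 * k.+1) [set x | x != Hroot k.+1].
Proof.
elim: k => [|k IH] s s_inj.
  have [a [b [j1 [j2 [c [d [jc [jd [neq le1 le2 lec led]]]]]]]]] :=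
    median_of_medians (fun i j => s (@Hcopy 0 i j tt)).
  exists (s (@Hcopy 0 a b tt)); case/and5P: (neq) => j1b _ _ ca _.
  apply: (Hsq_cut_matching_succ2 (X := set0) neq (cut_matching0 _ _ _)).
  - exact: sub0set.
  - exists (@Hcopy 0 a j1 tt); first exact: Hcopyset_in.
    by apply: inj_ltn le1 _ => //; apply/eqP => -[/eqP]; rewrite (negbTE j1b).
  - by exists (@Hcopy 0 a j2 tt); first exact: Hcopyset_in.
  - exists (@Hcopy 0 c jc tt); first by rewrite in_setU Hbranch_copy.
    by apply: inj_ltn lec _ => //; apply/eqP => -[/eqP]; rewrite (negbTE ca).
  - by exists (@Hcopy 0 d jd tt); first by rewrite in_setU Hbranch_copy orbT.
have force (ij : 'I_3 * 'I_3) :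
    forces_matching (Hsq k.+2) (2 * k.+1) (Hcopy ij.1 ij.2 @: [set x | x != Hroot k.+1]).
  by apply: forces_matching_imset IH; [exact: Hcopy_inj | exact: Hsq_copy].
have [f cut_f] := fin_all_exists (fun ij => force ij s s_inj).
have [a [b [j1 [j2 [c [d [jc [jd [neq le1 le2 lec led]]]]]]]]] :=
  median_of_medians (fun i j => f (i, j)).
have m_gt0 : 0 < 2 * k.+1 by rewrite muln_gt0.
have lo (i j : 'I_3) : exists2 x, x \in Hcopyset k.+1 i j & s x < f (i, j).
  have [_ [y [/imsetP [w _ ->] _ sy _]]] := cut_matching_straddle m_gt0 (cut_f (i, j)).
  by exists (Hcopy i j w); first exact: Hcopyset_in.
have hi (i j : 'I_3) : exists2 x, x \in Hcopyset k.+1 i j & f (i, j) <= s x.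
  have [_ [y [_ /imsetP [w _ ->] _ sy]]] := cut_matching_straddle m_gt0 (cut_f (i, j)).
  by exists (Hcopy i j w); first exact: Hcopyset_in.
exists (f (a, b)); rewrite mulnS add2n.
apply: (Hsq_cut_matching_succ2 neq (cut_f (a, b))) => //.
- by have [x xC sx] := lo a j1; exists x => //; apply: leq_trans sx le1.
- by have [x xC sx] := hi a j2; exists x => //; apply: leq_trans le2 sx.
- have [x xC sx] := lo c jc; exists x; last exact: leq_trans sx lec.
  by rewrite in_setU (subsetP (Hcopyset_branch _ _ _) _ xC).
- have [x xC sx] := hi d jd; exists x; last exact: leq_trans led sx.
  by rewrite in_setU (subsetP (Hcopyset_branch _ _ _) _ xC) orbT.
Qed.

Theorem mainTheorem4 (k : nat) :
  [/\ lmw (@Hadj k) = k,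
      lmw (sq_graph (@Hadj k)) = (2 * k)%N
    & lmw (del_vertex (sq_graph (@Hadj k)) (Hroot k)) = (2 * k)%N].
Proof.
case: k => [|k].
  by split; apply/eqP; rewrite -leqn0 ?lmw_Hadj_le ?lmw_Hsq_le ?lmw_Hsq_del_le.
have root_free : [set x | x != Hroot k.+1] \subset
    codom (val : {x : Hv k.+1 | x != Hroot k.+1} -> Hv k.+1).
  by apply/subsetP => x; rewrite inE => xr; apply/codomP; exists (exist _ x xr).
split; apply/eqP; rewrite eqn_leq.
- by rewrite lmw_Hadj_le (lmw_ge (@Hadj_forces_matching k)).
- by rewrite lmw_Hsq_le (lmw_ge (@Hsq_forces_matching k)).
- rewrite lmw_Hsq_del_le /=; apply: lmw_ge.
  exact: (forces_matching_preimset val_inj (fun _ _ => erefl) root_free (@Hsq_forces_matching k)).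
Qed.
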